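(* Let $0\le k\le r$ and $(\mathcal F|\mathcal G,\mathbf e)\in\mathcal T^{n-k-1}$, with biflats $F_1|G_1,\dots,F_{n-k-1}|G_{n-k-1}$ and $F_0=\emptyset$, $F_{n-k}=E$, $G_0=E$, $G_{n-k}=\emptyset$. Suppose $x_{\mathcal F|\mathcal G}\,\gamma^k\neq0$ in $A_{M,M^\perp}$. Then (1) there is exactly one index $d\in\{0,1,\dots,n-k-1\}$ with $F_d\subsetneq F_{d+1}$ and $G_d\supsetneq G_{d+1}$; (2) the distinct flats among $F_1,\dots,F_{n-k-1}$ other than $E$ are exactly $r-k$ in number and have ranks $1,2,\dots,r-k$ in $M$, and the sets $G_0,G_1,\dots,G_{n-k}$ include a flat of $M^\perp$ of every rank $0,1,\dots,n-r$.
   Context: Let $M$ be a matroid with no loops and no coloops on the ground set $E=\{0,1,\dots,n\}$, totally ordered by the usual order of integers, of rank $r+1$; its dual $M^\perp$ has rank $n-r$. A biflat of $M$ is a pair $F|G$ where $F$ is a flat of $M$, $G$ is a flat of $M^\perp$, both are nonempty, they are not both equal to $E$, and $F\cup G=E$. Two biflats $F|G$, $F'|G'$ are compatible if ($F\subseteq F'$ and $G\supseteq G'$) or ($F\supseteq F'$ and $G\subseteq G'$). A biflag is a set of pairwise compatible biflats with $\bigcup_{F|G}(F\cap G)\neq E$; its length is its number of biflats. Conormal Chow ring: $S$ is the polynomial ring over $\mathbb R$ in variables $x_{F|G}$, one per biflat; $x_{\mathcal F|\mathcal G}=\prod_{F|G\in\mathcal F|\mathcal G}x_{F|G}$. For $i\in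 E$, $\gamma_i=\sum_{i\in F,\,F\neq E}x_{F|G}$, $\bar\gamma_i=\sum_{i\in G,\,G\neq E}x_{F|G}$. $I$ is generated by the $x_{\mathcal F|\mathcal G}$ for sets of biflats that are not biflags, $J$ by all $\gamma_i-\gamma_j$, $\bar\gamma_i-\bar\gamma_j$; $A_{M,M^\perp}=S/(I+J)$, and $\gamma$ is the common class of the $\gamma_i$. $\mathcal T^m$: the set of pairs $(\mathcal F|\mathcal G,\mathbf e)$ with $\mathcal F|\mathcal G$ a biflag of length $m$ with biflats indexed $F_1|G_1,\dots,F_m|G_m$, $F_1\subseteq\cdots\subseteq F_m$, $G_1\supseteq\cdots\supseteq G_m$, and $\mathbf e=(e_1,\dots,e_m)$ distinct elements of $E$ with $e_i\in F_i\cap G_i$ and $e_i=\max\big(E-\bigcup_{j:\,e_j>e_i}(F_j\cap G_j)\big)$ for all $i$. *)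

From HB Require Import structures.
From mathcomp Require Import all_boot all_order all_algebra.
From mathcomp Require Import reals.
From mathcomp Require Import mpoly.

Set Implicit Arguments.
Unset Strict Implicit.
Unset Printing Implicit Defensive.

Import Order.TTheory GRing.Theory Num.Theory.


Section Matroid.
Variable n : nat.
Local Notation E := 'I_n.+1.
Variable rk : {set E} -> nat.

Definition is_matroid_rank : Prop :=
  [/\ forall A : {set E}, rk A <= #|A|,
      forall A B : {set E}, A \subset B -> rk A <= rk B
    & forall A B : {set E}, rk (A :|: B) + rk (A :&: B) <= rk A + rk B].

Definition dual_rank (A : {set E}) : nat := #|A| + rk (~: A) - rk [set: E].

Definition no_loops : Prop := forall x : E, rk [set x] = 1.
Definition no_coloops : Prop := forall x : E, rk (~: [set x]) = rk [set: E].

Definition is_flat (rho : {set E} -> nat) (F : {set E}) : bool :=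
  [forall x, (x \notin F) ==> (rho F < rho (x |: F))].

Definition is_biflat (P : {set E} * {set E}) : bool :=
  [&& is_flat rk P.1, is_flat dual_rank P.2, P.1 != set0, P.2 != set0,
      ~~ ((P.1 == [set: E]) && (P.2 == [set: E])) & P.1 :|: P.2 == [set: E]].

Definition biflat := {P : {set E} * {set E} | is_biflat P}.

Definition compatible (b b' : biflat) : bool :=
  let: (F, G) := val b in let: (F', G') := val b' in
  ((F \subset F') && (G' \subset G)) || ((F' \subset F) && (G \subset G')).

Definition is_biflag (B : {set biflat}) : bool :=
  [forall b in B, forall b' in B, compatible b b'] &&
  (\bigcup_(b in B) ((val b).1 :&: (val b).2) != [set: E]).

Variable R : realType.
Local Open Scope ring_scope.
Definition nvar := #|{: biflat}|.
Definition chowS := {mpoly R[nvar]}.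

Definition xvar (b : biflat) : chowS := 'X_(enum_rank b).

Definition gam (i : E) : chowS :=
  \sum_(b : biflat | (i \in (val b).1) && ((val b).1 != [set: E])) xvar b.
Definition gambar (i : E) : chowS :=
  \sum_(b : biflat | (i \in (val b).2) && ((val b).2 != [set: E])) xvar b.

Definition chow_gen (p : chowS) : Prop :=
  (exists B : {set biflat}, ~~ is_biflag B /\ p = \prod_(b in B) xvar b)
  \/ (exists i j : E, p = gam i - gam j)
  \/ (exists i j : E, p = gambar i - gambar j).

Definition in_ideal (S : chowS -> Prop) (p : chowS) : Prop :=
  exists s : seq (chowS * chowS),
    (forall q, q \in s -> S q.2) /\ p = \sum_(q <- s) q.1 * q.2.

(* p is nonzero in A_{M,M^perp} = S/(I+J) *)
Definition nonzero_in_chow (p : chowS) : Prop := ~ in_ideal chow_gen p.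
Local Close Scope ring_scope.

End Matroid.

Definition Fext n rk (m : nat) (f : nat -> biflat rk) (d : nat) : {set 'I_n.+1} :=
  if d == 0 then set0 else if d <= m then (val (f d)).1 else [set: 'I_n.+1].
Definition Gext n rk (m : nat) (f : nat -> biflat rk) (d : nat) : {set 'I_n.+1} :=
  if d == 0 then [set: 'I_n.+1] else if d <= m then (val (f d)).2 else set0.

(* (f, e) in T^m : f 1, ..., f m are the biflats (indices outside [1,m] ignored) *)
Definition in_T n rk (m : nat) (f : nat -> biflat rk) (e : nat -> 'I_n.+1) : Prop :=
  is_biflag [set f i.+1 | i : 'I_m] /\
  [/\ (forall i j, 0 < i <= m -> 0 < j <= m -> f i = f j -> i = j),
      (forall i j, 0 < i -> i <= j -> j <= m ->
         ((val (f i)).1 \subset (val (f j)).1) && ((val (f j)).2 \subset (val (f i)).2)),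
      (forall i j, 0 < i <= m -> 0 < j <= m -> e i = e j -> i = j),
      (forall i, 0 < i <= m -> e i \in (val (f i)).1 :&: (val (f i)).2)
    & (forall i, 0 < i <= m ->
         let S := ~: \bigcup_(j : 'I_m | e i < e j.+1)
                       ((val (f j.+1)).1 :&: (val (f j.+1)).2) in
         e i \in S /\ forall y, y \in S -> y <= e i)].

(* Write m = n-k-1 and extend the flag by F_0 = {}, F_{m+1} = E, G_0 = E,
   G_{m+1} = {}.  The proof has three ingredients.
   - Vanishing: if a set B of biflats contains some F|G with F <> E and
     rk F + c >= rk E, then x_B gamma^c lies in the ideal I + J.  By
     induction on c: choosing i outside F, gamma = gamma_i modulo J, and
     x_B gamma_i is a sum of monomials each either killed by I or containing
     a biflat with a strictly larger flat.  So nonvanishing of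
     x_{F|G} gamma^k bounds the rank of every proper F_d by r-k.
   - Counting: the potential t_d = u_d + (n-r - corank G_d), where u_d is
     rk F_d (or r-k+1 when F_d = E), goes from 0 to m+2 and grows at step d
     by at least the number a_d >= 1 of sides F, G that change there.  Since
     the union of the F_d :&: G_d is not E, some step changes both sides.
     A purely arithmetic lemma then forces a single such step and makes all
     the inequalities equalities.
   - Assertion (1) is the uniqueness of that step; (2) and (3) follow by a
     discrete intermediate value argument on the ranks of F_d and G_d, which
     now move by at most one at each step. *)
From HB Require Import structures.
From mathcomp Require Import all_boot all_order all_algebra.
From mathcomp Require Import reals.
From mathcomp Require Import mpoly.
From mathcomp Require Import ring zify.
Import GRing.Theory.

Set Implicit Arguments.
Unset Strict Implicit.
Unset Printing Implicit Defensive.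

Section Ideal.
Variables (n : nat) (rk : {set 'I_n.+1} -> nat) (R : realType).
Local Notation P := (chowS rk R).
Local Open Scope ring_scope.
Implicit Types (S : P -> Prop) (p q : P).

Lemma in_ideal0 S : in_ideal S 0.
Proof. by exists [::]; split => //; rewrite big_nil. Qed.

Lemma in_idealD S p q : in_ideal S p -> in_ideal S q -> in_ideal S (p + q).
Proof.
case=> [s1 [H1 ->]] [s2 [H2 ->]]; exists (s1 ++ s2); split; last by rewrite big_cat.
by move=> x; rewrite mem_cat => /orP[/H1|/H2].
Qed.

Lemma in_idealMl S a p : in_ideal S p -> in_ideal S (a * p).
Proof.
case=> [s [H ->]]; exists [seq (a * x.1, x.2) | x <- s]; split.
  by move=> x /mapP[y ys ->] /=; apply: H.
by rewrite big_map big_distrr /=; apply: eq_bigr => x _; rewrite mulrA.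
Qed.

Lemma in_idealMr S a p : in_ideal S p -> in_ideal S (p * a).
Proof. by rewrite mulrC; apply: in_idealMl. Qed.

Lemma in_ideal_gen S g : S g -> in_ideal S g.
Proof.
move=> Sg; exists [:: (1, g)]; rewrite big_seq1 mul1r; split => //.
by move=> x; rewrite inE => /eqP ->.
Qed.

Lemma in_ideal_sum S (I : finType) (Q : pred I) (F : I -> P) :
  (forall i, Q i -> in_ideal S (F i)) -> in_ideal S (\sum_(i | Q i) F i).
Proof. by move=> H; apply: (big_ind (in_ideal S)) => //; [exact: in_ideal0 | exact: in_idealD]. Qed.

End Ideal.

Section RankFunction.
Variable n : nat.
Local Notation E := 'I_n.+1.

Lemma flat_rank_lt (rho : {set E} -> nat) (F F' : {set E}) :
  (forall A B : {set E}, A \subset B -> rho A <= rho B) ->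
  is_flat rho F -> F \proper F' -> rho F < rho F'.
Proof.
move=> rho_mono /forallP flatF /properP [sFF' [x xF' xF]].
apply: leq_trans (implyP (flatF x) xF) (rho_mono _ _ _).
by apply/subsetP => y; rewrite !inE => /orP[/eqP->|/(subsetP sFF')].
Qed.

End RankFunction.

Section Matroid.
Variables (n : nat) (rk : {set 'I_n.+1} -> nat).
Hypothesis Hmat : is_matroid_rank rk.
Hypothesis Hloop : no_loops rk.
Hypothesis Hcoloop : no_coloops rk.
Local Notation E := 'I_n.+1.

Lemma rk_mono (A B : {set E}) : A \subset B -> rk A <= rk B.
Proof. by case: Hmat => _ H _; apply: H. Qed.

Lemma rk_card (A : {set E}) : rk A <= #|A|.
Proof. by case: Hmat. Qed.

Lemma rk0 : rk set0 = 0.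
Proof. by apply/eqP; rewrite -leqn0 -(cards0 E) rk_card. Qed.

Lemma rk_pos (A : {set E}) : A != set0 -> 0 < rk A.
Proof. by case/set0Pn => x xA; rewrite -(Hloop x) rk_mono // sub1set. Qed.

Lemma rkU_le (X Y : {set E}) : rk (X :|: Y) <= rk X + #|Y|.
Proof. by case: Hmat => _ _ /(_ X Y); have := rk_card Y; lia. Qed.

Lemma dual_rank_mono (A B : {set E}) : A \subset B -> dual_rank rk A <= dual_rank rk B.
Proof.
move=> sAB; rewrite /dual_rank.
have complA : ~: A = ~: B :|: (B :\: A).
  apply/setP => x; rewrite !inE.
  by case: (x \in A) (x \in B) (subsetP sAB x) => [] [] // /(_ isT).
have cardB : #|B| = #|A| + #|B :\: A|.
  by rewrite -(cardsID A B) (setIidPr sAB) setDE.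
have := rkU_le (~: B) (B :\: A); rewrite -complA cardB; lia.
Qed.

Lemma dual_rank0 : dual_rank rk set0 = 0.
Proof. by rewrite /dual_rank cards0 setC0 add0n subnn. Qed.

Lemma dual_rankT : dual_rank rk setT = n.+1 - rk setT.
Proof. by rewrite /dual_rank cardsT card_ord setCT rk0 addn0. Qed.

Lemma dual_rank_pos (A : {set E}) : A != set0 -> 0 < dual_rank rk A.
Proof.
case/set0Pn => x xA.
have : dual_rank rk [set x] <= dual_rank rk A by apply: dual_rank_mono; rewrite sub1set.
by rewrite /dual_rank cards1 Hcoloop; lia.
Qed.

Lemma rkT_le : rk setT <= n.
Proof. by have := rk_card (~: [set ord0]); rewrite Hcoloop cardsC1 card_ord. Qed.

End Matroid.

Section Vanishing.
Variables (n : nat) (rk : {set 'I_n.+1} -> nat) (R : realType).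
Hypothesis Hmat : is_matroid_rank rk.
Local Notation E := 'I_n.+1.
Local Notation x := (xvar R).
Local Notation gamma := (gam rk R).

Lemma biflatP (b : biflat rk) :
  [/\ is_flat rk (val b).1, is_flat (dual_rank rk) (val b).2, (val b).1 != set0,
      (val b).2 != set0 & (val b).1 :|: (val b).2 = setT].
Proof. by case/and5P: (valP b) => ? ? ? ? /andP[_ /eqP ?]; split. Qed.

Lemma compatibleE (b b' : biflat rk) : compatible b b' =
  (((val b).1 \subset (val b').1) && ((val b').2 \subset (val b).2)) ||
  (((val b').1 \subset (val b).1) && ((val b).2 \subset (val b').2)).
Proof. by rewrite /compatible; case: (val b) => ? ?; case: (val b') => ? ?. Qed.

Lemma biflag_compatible (B : {set biflat rk}) b b' :
  is_biflag B -> b \in B -> b' \in B -> compatible b b'.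
Proof. by case/andP => /forall_inP H _ bB /(forall_inP (H b bB)). Qed.

Lemma compatible_rank_lt (b0 b : biflat rk) (i : E) :
  compatible b b0 -> i \in (val b).1 -> i \notin (val b0).1 ->
  rk (val b0).1 < rk (val b).1.
Proof.
move=> cmp ib ib0; apply: flat_rank_lt (rk_mono Hmat) _ _; first by case: (biflatP b0).
move: cmp; rewrite compatibleE => /orP[/andP[/subsetP sub _]|/andP[sub _]].
  by move: ib0; rewrite (sub i ib).
by rewrite properEneq sub andbT; apply: contraNneq ib0 => ->.
Qed.

Local Open Scope ring_scope.

Lemma prod_xvar_setU1 (B : {set biflat rk}) b :
  (\prod_(b' in B) x b') * x b =
  (\prod_(b' in b |: B) x b') * (if b \in B then x b else 1).
Proof.
case: ifP => bB; first by rewrite (setUidPr _) // sub1set.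
by rewrite big_setU1 /= ?bB // mulr1 mulrC.
Qed.

(* Modulo J, gamma = gamma_0 may be replaced by gamma_i: one factor of
   gamma^(c+1) splits off as (gamma_0 - gamma_i) plus the sum defining gamma_i. *)
Lemma gamma_power_split (p : chowS rk R) (i : E) (c : nat) :
  p * gamma ord0 ^+ c.+1 =
    (p * gamma ord0 ^+ c) * (gamma ord0 - gamma i)
    + \sum_(b : biflat rk | (i \in (val b).1) && ((val b).1 != [set: E]))
        (p * x b * gamma ord0 ^+ c).
Proof. by rewrite -big_distrl /= -big_distrr /= -/(gamma i) exprS; ring. Qed.

Lemma monomial_gamma_vanishes (c : nat) (B : {set biflat rk}) (b0 : biflat rk) :
  b0 \in B -> (val b0).1 != [set: E] -> (rk [set: E] <= rk (val b0).1 + c)%N ->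
  in_ideal (@chow_gen n rk R) ((\prod_(b in B) x b) * gamma ord0 ^+ c).
Proof.
elim: c B b0 => [|c IH] B b0 b0B b0T rk_le.
  have : (rk (val b0).1 < rk [set: E])%N.
    by apply: flat_rank_lt (rk_mono Hmat) _ _; [case: (biflatP b0) | rewrite properT].
  by rewrite ltnNge -[rk (val b0).1]addn0 rk_le.
have [i iF] : exists i, i \notin (val b0).1.
  by apply/existsP; rewrite -negb_forall; apply: contra b0T => /forallP H;
     apply/eqP/setP => y; rewrite inE H.
rewrite (gamma_power_split _ i); apply: in_idealD.
  by apply/in_idealMl/in_ideal_gen; right; left; exists ord0, i.
apply: in_ideal_sum => b /andP[ibF bT]; rewrite prod_xvar_setU1 mulrAC; apply: in_idealMr.
have [flagB'|] := boolP (is_biflag (b |: B)); last first.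
  by move=> notflag; apply/in_idealMr/in_ideal_gen; left; exists (b |: B).
apply: (IH _ b) => //; first exact: setU11.
have := compatible_rank_lt (biflag_compatible flagB' (setU11 b B) (setU1r b b0B)) ibF iF.
by move: rk_le; rewrite addnS; lia.
Qed.

Lemma nonzero_monomial_rank_bound (k : nat) (B : {set biflat rk}) (b : biflat rk) :
  nonzero_in_chow ((\prod_(b' in B) x b') * gamma ord0 ^+ k) ->
  b \in B -> (val b).1 != [set: E] -> (rk (val b).1 + k < rk [set: E])%N.
Proof.
move=> Hnz bB bT; rewrite ltnNge; apply/negP => rk_le.
by apply: Hnz; apply: monomial_gamma_vanishes bB bT rk_le.
Qed.

End Vanishing.

Lemma forced_increments (t a : nat -> nat) (m d0 : nat) :
  (forall d, d <= m -> t d + a d <= t d.+1) -> (forall d, d <= m -> 0 < a d) ->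
  t 0 = 0 -> t m.+1 = m.+2 -> d0 <= m -> 1 < a d0 ->
  forall d, d <= m -> t d.+1 = t d + a d /\ a d = (d == d0).+1.
Proof.
move=> t_step a_pos t0 tm d0m a_d0.
(* counting increments from the left: t d >= d, plus one once past d0 *)
have lower d : d <= m.+1 -> d + (d0 < d) <= t d.
  elim: d => [|d IH] dm; first by rewrite t0.
  have := t_step d dm; have := a_pos d dm; have := IH (ltnW dm).
  by case: (ltngtP d0 d) => [|| dd0]; [lia | lia | move: a_d0; rewrite dd0; lia].
(* counting increments from the right, down from t (m+1) = m+2 *)
have upper j : j <= m.+1 -> t (m.+1 - j) + j + (m.+1 - j <= d0) <= t m.+1.
  elim: j => [|j IH] jm; first by rewrite subn0 addn0 /= ltnNge d0m addn0.
  move: (IH (ltnW jm)); have -> : m.+1 - j = (m.+1 - j.+1).+1 by lia.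
  have := t_step (m.+1 - j.+1) ltac:(lia); have := a_pos (m.+1 - j.+1) ltac:(lia).
  case: (ltngtP (m.+1 - j.+1) d0) => [|| dd0]; [lia | lia | move: a_d0; rewrite -dd0; lia].
have t_val d : d <= m.+1 -> t d = d + (d0 < d).
  move=> dm; have := lower d dm; have := upper (m.+1 - d) ltac:(lia).
  rewrite (_ : m.+1 - (m.+1 - d) = d) ?tm; last lia.
  by case: (ltngtP d0 d); lia.
move=> d dm; have := t_val d (leqW dm); have := t_val d.+1 dm.
have := t_step d dm; have := a_pos d dm.
by case: eqVneq => [->|]; lia.
Qed.

Lemma discrete_ivt (h : nat -> nat) (N j : nat) :
  (forall d, d < N -> h d.+1 <= (h d).+1) -> h 0 <= j <= h N ->
  exists2 d, d <= N & h d = j.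
Proof.
elim: N => [|N IH] h_step /andP[h0j jhN]; first by exists 0 => //; lia.
have [jhN'|] := leqP j (h N).
  have [d dN hd] := IH (fun d dN => h_step d (ltnW dN)) (introT andP (conj h0j jhN')).
  by exists d => //; apply: leqW.
by exists N.+1 => //; have := h_step N (ltnSn N); lia.
Qed.

Section ExtendedFlag.
Variables (n : nat) (rk : {set 'I_n.+1} -> nat).
Local Notation E := 'I_n.+1.
Variables (m : nat) (f : nat -> biflat rk).
Hypothesis Hinj : forall i j, 0 < i <= m -> 0 < j <= m -> f i = f j -> i = j.
Hypothesis Hchain : forall i j, 0 < i -> i <= j -> j <= m ->
  ((val (f i)).1 \subset (val (f j)).1) && ((val (f j)).2 \subset (val (f i)).2).
Hypothesis Hflag : is_biflag [set f i.+1 | i : 'I_m].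
Local Notation Fx := (Fext m f).
Local Notation Gx := (Gext m f).

Lemma setT_neq0 : [set: E] != set0.
Proof. by apply/set0Pn; exists ord0. Qed.

Lemma Fext_mid d : 0 < d <= m -> Fx d = (val (f d)).1.
Proof. by case/andP => d0 dm; rewrite /Fext eqn0Ngt d0 dm. Qed.

Lemma Gext_mid d : 0 < d <= m -> Gx d = (val (f d)).2.
Proof. by case/andP => d0 dm; rewrite /Gext eqn0Ngt d0 dm. Qed.

Lemma Fext_last : Fx m.+1 = setT.
Proof. by rewrite /Fext /= ltnn. Qed.

Lemma Gext_last : Gx m.+1 = set0.
Proof. by rewrite /Gext /= ltnn. Qed.

Lemma Fmono d : d <= m -> Fx d \subset Fx d.+1.
Proof.
rewrite /Fext; case: d => [|d] dm /=; first exact: sub0set.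
rewrite dm; case: ifP => dm'; last exact: subsetT.
by case/andP: (Hchain (ltn0Sn d) (leqnSn _) dm').
Qed.

Lemma Gmono d : d <= m -> Gx d.+1 \subset Gx d.
Proof.
rewrite /Gext; case: d => [|d] dm /=; first exact: subsetT.
rewrite dm; case: ifP => dm'; last exact: sub0set.
by case/andP: (Hchain (ltn0Sn d) (leqnSn _) dm').
Qed.

Lemma Fmono_le d1 d2 : d1 <= d2 -> d2 <= m.+1 -> Fx d1 \subset Fx d2.
Proof.
elim: d2 => [|d2 IH]; first by rewrite leqn0 => /eqP ->.
rewrite leq_eqVlt => /orP[/eqP -> //|]; rewrite ltnS => d12 d2m.
exact: subset_trans (IH d12 (ltnW d2m)) (Fmono d2m).
Qed.

Lemma FGU d : d <= m.+1 -> Fx d :|: Gx d = setT.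
Proof.
rewrite /Fext /Gext; case: d => [|d] dm /=; first by rewrite set0U.
by case: ifP => _; [case: (biflatP (f d.+1)) | rewrite setU0].
Qed.

Lemma Fflat d : 0 < d <= m -> is_flat rk (Fx d).
Proof. by move=> dm; rewrite Fext_mid //; case: (biflatP (f d)). Qed.

Lemma Gflat d : 0 < d <= m -> is_flat (dual_rank rk) (Gx d).
Proof. by move=> dm; rewrite Gext_mid //; case: (biflatP (f d)). Qed.

Lemma Fne0 d : 0 < d -> Fx d != set0.
Proof.
move=> d0; rewrite /Fext eqn0Ngt d0 /=.
by case: ifP => _; [case: (biflatP (f d)) | exact: setT_neq0].
Qed.

Lemma Gne0 d : d <= m -> Gx d != set0.
Proof.
rewrite /Gext; case: d => [|d] dm /=; first exact: setT_neq0.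
by rewrite dm; case: (biflatP (f d.+1)).
Qed.

Lemma extended_step_changes d : d <= m -> (Fx d != Fx d.+1) || (Gx d != Gx d.+1).
Proof.
case: d => [|d] dm; first by rewrite /Fext /= eq_sym (Fne0 (ltn0Sn 0)).
case: (ltngtP d.+1 m) dm => // [lt_dm|eq_dm] _; last first.
  rewrite eq_dm Gext_last Gext_mid; last by rewrite lt0n -eq_dm /=.
  by case: (biflatP (f m)) => _ _ _ -> _; rewrite orbT.
have dm1 : 0 < d.+1 <= m by exact: ltnW lt_dm.
have dm2 : 0 < d.+2 <= m by exact: lt_dm.
have ne : f d.+1 != f d.+2 by apply/eqP => /(Hinj dm1 dm2) [/n_Sn].
rewrite !Fext_mid ?Gext_mid //.
apply: contraR ne; rewrite negb_or !negbK => /andP[/eqP eqF /eqP eqG].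
by apply/eqP/val_inj; rewrite [val (f d.+1)]surjective_pairing eqF eqG -surjective_pairing.
Qed.

(* Since the union of the F_i :&: G_i is not E, some step of the extended
   flag enlarges F and shrinks G simultaneously. *)
Lemma exists_double_step :
  exists2 d, d <= m & Fx d \proper Fx d.+1 /\ Gx d.+1 \proper Gx d.
Proof.
have [/existsP[d /andP[Fp Gp]]|no_double] :=
  boolP [exists d : 'I_m.+1, (Fx d \proper Fx d.+1) && (Gx d.+1 \proper Gx d)].
  by exists d => //; rewrite -ltnS.
exfalso; case/andP: Hflag => _ /negP; apply; apply/eqP/setP => x; rewrite inE.
(* the first index d+1 with x in F_{d+1} *)
have exF : exists d, x \in Fx d by exists m.+1; rewrite Fext_last inE.
case: (ex_minnP exF) => -[|d]; first by rewrite /Fext /= inE.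
move=> xFd1 Fmin; have dm : d <= m by rewrite -ltnS Fmin // Fext_last inE.
have xFd : x \notin Fx d by apply/negP => /Fmin; rewrite ltnn.
have Fp : Fx d \proper Fx d.+1.
  by rewrite properEneq Fmono // andbT; apply: contraNneq xFd => ->.
have Geq : Gx d.+1 = Gx d.
  apply/eqP; rewrite eqEsubset Gmono //=.
  move: no_double; rewrite negb_exists => /forallP /(_ (Ordinal (dm : d < m.+1))) /=.
  by rewrite Fp /= properE Gmono //= negbK.
have xGd1 : x \in Gx d.+1.
  by rewrite Geq; move/setP: (FGU (leqW dm)) => /(_ x); rewrite !inE (negbTE xFd).
case: (ltngtP d m) dm => [lt_dm|//|eq_dm] _; last by move: xGd1; rewrite eq_dm Gext_last inE.
apply/bigcupP; exists (f d.+1); first by apply/imsetP; exists (Ordinal lt_dm).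
have dm1 : 0 < d.+1 <= m by exact: lt_dm.
by rewrite inE -(Fext_mid dm1) -(Gext_mid dm1) xFd1 xGd1.
Qed.

Lemma prod_flag_xvar (R : realType) :
  (\prod_(i < m) xvar R (f i.+1) = \prod_(b in [set f i.+1 | i : 'I_m]) xvar R b)%R.
Proof.
rewrite big_imset //= => i j _ _ /Hinj eq_ij; apply/val_inj.
by case: (eq_ij (ltn_ord i) (ltn_ord j)).
Qed.

Lemma nonzero_flag_rank_bound (R : realType) (r k : nat) :
  is_matroid_rank rk -> rk [set: E] = r.+1 ->
  nonzero_in_chow ((\prod_(i < m) xvar R (f i.+1)) * gam rk R ord0 ^+ k)%R ->
  forall d, 0 < d <= m -> Fx d != setT -> rk (Fx d) <= r - k.
Proof.
move=> Hmat Hrank; rewrite prod_flag_xvar => Hnz d dm; rewrite Fext_mid // => FT.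
have fdB : f d \in [set f i.+1 | i : 'I_m].
  case/andP: dm => d0 dm; have dm' : d.-1 < m by rewrite prednK.
  by apply/imsetP; exists (Ordinal dm') => //=; rewrite prednK.
have := nonzero_monomial_rank_bound Hmat Hnz fdB FT; rewrite Hrank ltnS => le_rk.
by rewrite leq_subRL ?(leq_trans (leq_addl _ _) le_rk) // addnC.
Qed.

End ExtendedFlag.

Section Potential.
Variables (n : nat) (rk : {set 'I_n.+1} -> nat).
Hypothesis Hmat : is_matroid_rank rk.
Hypothesis Hloop : no_loops rk.
Hypothesis Hcoloop : no_coloops rk.
Local Notation E := 'I_n.+1.
Variables (m : nat) (f : nat -> biflat rk).
Hypothesis Hinj : forall i j, 0 < i <= m -> 0 < j <= m -> f i = f j -> i = j.
Hypothesis Hchain : forall i j, 0 < i -> i <= j -> j <= m ->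
  ((val (f i)).1 \subset (val (f j)).1) && ((val (f j)).2 \subset (val (f i)).2).
Hypothesis Hflag : is_biflag [set f i.+1 | i : 'I_m].
Local Notation Fx := (Fext m f).
Local Notation Gx := (Gext m f).
Variables (r k : nat).
Hypothesis Hrank : rk [set: E] = r.+1.
Hypothesis Hk : k <= r.
Hypothesis Hm : m.+1 = n - k.
Hypothesis Hbound : forall d, 0 < d <= m -> Fx d != setT -> rk (Fx d) <= r - k.

Definition u d := if Fx d == setT then (r - k).+1 else rk (Fx d).
Definition v d := dual_rank rk (Gx d).
Definition a d := ((Fx d != Fx d.+1) + (Gx d != Gx d.+1))%N.
Definition t d := u d + (n - r - v d).

Lemma proper_neq (A B : {set E}) : A \proper B -> (A != B) /\ (B != A).
Proof. by rewrite properEneq => /andP[neq _]; split; rewrite // eq_sym. Qed.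

Lemma rk_le_n : r.+1 <= n.
Proof. by rewrite -Hrank rkT_le. Qed.

Lemma v_le d : v d <= n - r.
Proof.
have := dual_rank_mono Hmat (subsetT (Gx d)).
by rewrite /v dual_rankT // Hrank subSS.
Qed.

Lemma proper_Fext_rank d : d <= m -> Fx d != setT -> rk (Fx d) <= r - k.
Proof. by case: d => [|d] dm FT; [rewrite /Fext /= rk0 | apply: Hbound]. Qed.

Lemma u_step d : d <= m -> u d + (Fx d != Fx d.+1) <= u d.+1.
Proof.
move=> dm; have [eqF|neF] := eqVneq (Fx d) (Fx d.+1); first by rewrite /u eqF addn0.
have Fp : Fx d \proper Fx d.+1 by rewrite properEneq neF Fmono.
have FdT : Fx d != setT by apply: contraTneq Fp => ->; rewrite properE subsetT andbF.
rewrite /u (negbTE FdT) addn1; case: eqP => [_|/eqP FnT].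
  by rewrite ltnS proper_Fext_rank.
case: d dm neF Fp FdT FnT => [|d] dm _ Fp _ FnT.
  by rewrite {1}/Fext /= rk0 // rk_pos // Fne0.
by apply: flat_rank_lt (rk_mono Hmat) (Fflat _ _) Fp; lia.
Qed.

Lemma v_step d : d <= m -> v d.+1 + (Gx d != Gx d.+1) <= v d.
Proof.
move=> dm; have [eqG|neG] := eqVneq (Gx d) (Gx d.+1); first by rewrite /v eqG addn0.
have Gp : Gx d.+1 \proper Gx d by rewrite properEneq eq_sym neG Gmono.
rewrite /v addn1; case: (ltngtP d m) dm => [lt_dm|//|eq_dm] _.
  by apply: flat_rank_lt (dual_rank_mono Hmat) (Gflat _ _) Gp; lia.
by rewrite eq_dm Gext_last dual_rank0 // dual_rank_pos // Gne0.
Qed.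

Lemma t_step d : d <= m -> t d + a d <= t d.+1.
Proof.
move=> dm; have := u_step dm; have := v_step dm; have := v_le d; have := v_le d.+1.
rewrite /t /a; lia.
Qed.

Lemma a_pos d : d <= m -> 0 < a d.
Proof. by move/(extended_step_changes Hinj); rewrite /a; case: (_ != _); case: (_ != _). Qed.

Lemma t_first : t 0 = 0.
Proof.
rewrite /t /u /v /Fext /Gext /= eq_sym (negbTE (setT_neq0 n)) rk0 // dual_rankT // Hrank.
by rewrite subSS subnn.
Qed.

Lemma t_last : t m.+1 = m.+2.
Proof. by rewrite /t /u /v Fext_last Gext_last eqxx dual_rank0 // subn0; have := rk_le_n; lia. Qed.

Lemma exact_steps : exists2 d0, d0 <= m & forall d, d <= m ->
  t d.+1 = t d + a d /\ a d = (d == d0).+1.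
Proof.
have [d0 d0m [Fp Gp]] := exists_double_step Hchain Hflag.
exists d0 => //; apply: forced_increments t_step a_pos t_first t_last d0m _.
by rewrite /a; case: (proper_neq Fp) => -> _; case: (proper_neq Gp) => _ ->.
Qed.

Lemma exact_increments d : d <= m ->
  u d.+1 = u d + (Fx d != Fx d.+1) /\ v d = v d.+1 + (Gx d != Gx d.+1).
Proof.
move=> dm; have [d0 _ /(_ d dm) [t_eq _]] := exact_steps.
have := u_step dm; have := v_step dm; have := v_le d; have := v_le d.+1.
by move: t_eq; rewrite /t /a; lia.
Qed.

Lemma unique_double_step :
  exists! d : nat, d <= m /\ Fx d \proper Fx d.+1 /\ Gx d.+1 \proper Gx d.
Proof.
have [d0 _ steps] := exact_steps.
have double_at d : d <= m -> Fx d \proper Fx d.+1 -> Gx d.+1 \proper Gx d -> d = d0.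
  move=> dm Fp Gp; have [_] := steps d dm; rewrite /a.
  by case: (proper_neq Fp) => -> _; case: (proper_neq Gp) => _ ->; case: eqP.
have [d1 d1m [Fp Gp]] := exists_double_step Hchain Hflag.
exists d1; split => // d' [d'm [Fp' Gp']].
by rewrite (double_at _ d1m Fp Gp) (double_at _ d'm Fp' Gp').
Qed.

Lemma dual_ranks_attained j : j <= n - r ->
  exists2 d : nat, d <= m.+1 & dual_rank rk (Gx d) = j.
Proof.
move=> jnr; have [d dm vd] : exists2 d, d <= m.+1 & n - r - v d = n - r - j.
  apply: discrete_ivt.
    move=> d dm; have [_ v_eq] := exact_increments dm.
    by have := v_le d; have := v_le d.+1; lia.
  by rewrite /v Gext_last dual_rank0 // /Gext /= dual_rankT // Hrank; lia.
by exists d => //; have := v_le d; move: vd; rewrite /v; lia.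
Qed.

Definition proper_flats := [set Fx i.+1 | i : 'I_m] :\ setT.

Lemma proper_flatsP F :
  F \in proper_flats -> exists2 d, 0 < d <= m & F = Fx d /\ F != setT.
Proof.
rewrite !inE => /andP[FT /imsetP[i _ eqF]].
by exists i.+1; [exact: ltn_ord | rewrite -eqF].
Qed.

Lemma proper_flats_rank F : F \in proper_flats -> 0 < rk F <= r - k.
Proof.
case/proper_flatsP => d /andP[d0 dm] [-> FT].
by rewrite rk_pos ?Fne0 //= proper_Fext_rank.
Qed.

Lemma proper_flats_rank_inj F1 F2 :
  F1 \in proper_flats -> F2 \in proper_flats -> rk F1 = rk F2 -> F1 = F2.
Proof.
suff le_case d1 d2 : 0 < d1 <= m -> d1 <= d2 -> d2 <= m ->
    rk (Fx d1) = rk (Fx d2) -> Fx d1 = Fx d2.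
  case/proper_flatsP => d1 d1m [-> _]; case/proper_flatsP => d2 d2m [-> _].
  case/andP: d1m (d1m) => _ d1m' d1m; case/andP: d2m (d2m) => _ d2m' d2m.
  have [le12|lt21] := leqP d1 d2; first exact: le_case.
  by move=> rk_eq; symmetry; apply: le_case (ltnW lt21) d1m' _.
move=> d1m d12 d2m rk_eq; have [//|Fp] := eqVproper (Fmono_le Hchain d12 (leqW d2m)).
by have := flat_rank_lt (rk_mono Hmat) (Fflat f d1m) Fp; rewrite rk_eq ltnn.
Qed.

(* Every rank 1, ..., r-k is attained, since u climbs by unit steps from 0
   to r-k+1. *)
Lemma proper_flats_rank_attained j : 0 < j <= r - k ->
  exists2 F, F \in proper_flats & rk F = j.
Proof.
case/andP => j0 jrk.
have [d dm ud] : exists2 d, d <= m.+1 & u d = j.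
  apply: discrete_ivt.
    move=> d dm; have [u_eq _] := exact_increments dm.
    by rewrite u_eq; case: (Fx d != Fx d.+1); rewrite ?addn0 ?addn1.
  by rewrite /u Fext_last eqxx /Fext /= eq_sym (negbTE (setT_neq0 n)) rk0 //; lia.
have FdT : Fx d != setT by apply/eqP => FdT; move: ud; rewrite /u FdT eqxx; lia.
case: d dm ud FdT => [|d] dm ud FdT.
  by move: ud; rewrite /u (negbTE FdT) /Fext /= rk0 //; lia.
have lt_dm : d < m.
  by rewrite ltn_neqAle -ltnS dm andbT; apply: contraNneq FdT => ->; rewrite Fext_last.
exists (Fx d.+1); last by move: ud; rewrite /u (negbTE FdT).
by rewrite !inE FdT; apply/imsetP; exists (Ordinal lt_dm).
Qed.

Lemma proper_flats_structure :
  #|proper_flats| = r - k /\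
  (forall j : nat, (exists2 F, F \in proper_flats & rk F = j) <-> 0 < j <= r - k).
Proof.
split; last first.
  move=> j; split=> [[F FD <-]|]; first exact: proper_flats_rank.
  exact: proper_flats_rank_attained.
(* F |-> rk F is a bijection from the proper flats onto {1, ..., r-k} *)
pose rank_ord (F : {set E}) : 'I_(r - k).+1 := inord (rk F).
have rank_ordE F : F \in proper_flats -> val (rank_ord F) = rk F.
  by move=> FD; rewrite /rank_ord /= inordK // ltnS; case/andP: (proper_flats_rank FD).
rewrite -(card_in_imset (f := rank_ord)); last first.
  by move=> F1 F2 F1D F2D /(congr1 val); rewrite !rank_ordE //; apply: proper_flats_rank_inj.
suff -> : rank_ord @: proper_flats = [set~ ord0] by rewrite cardsC1 card_ord.
apply/setP => i; rewrite !inE; apply/imsetP/idP => [[F FD ->]|i0].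
  by rewrite -val_eqE /= rank_ordE // -lt0n; case/andP: (proper_flats_rank FD).
have [|F FD rkF] := @proper_flats_rank_attained i.
  by rewrite lt0n -ltnS ltn_ord andbT; apply: contra i0 => /eqP i0; apply/eqP/val_inj.
by exists F => //; apply/val_inj; rewrite rank_ordE.
Qed.

End Potential.

Local Open Scope ring_scope.

Theorem mainTheorem13 (R : realType) (n r k : nat) (rk : {set 'I_n.+1} -> nat)
  (Hmat : is_matroid_rank rk) (Hloop : no_loops rk) (Hcoloop : no_coloops rk)
  (Hrank : rk [set: 'I_n.+1] = r.+1) (Hk : (k <= r)%N)
  (f : nat -> biflat rk) (e : nat -> 'I_n.+1)
  (HT : in_T (n - k - 1) f e)
  (Hnz : nonzero_in_chow
           ((\prod_(i < n - k - 1) xvar R (f i.+1)) * (gam rk R (@ord0 n)) ^+ k)) :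
  let m := (n - k - 1)%N in
  let Fx := Fext m f in
  let Gx := Gext m f in
  (exists! d : nat, (d <= m)%N /\ Fx d \proper Fx d.+1 /\ Gx d.+1 \proper Gx d)
  /\
  (let D := [set Fx i.+1 | i : 'I_m] :\ [set: 'I_n.+1] in
   #|D| = (r - k)%N /\
   (forall j : nat, (exists2 F, F \in D & rk F = j) <-> (0 < j <= r - k)%N))
  /\
  (forall j : nat, (j <= n - r)%N ->
     exists2 d : nat, (d <= m.+1)%N & dual_rank rk (Gx d) = j).
Proof.
move=> m Fx Gx; rewrite {}/Fx {}/Gx.
(* only the chain and biflag conditions of T^m are needed *)
case: HT => flag [inj chain _ _ _].
have Hm : m.+1 = (n - k)%N by have := rkT_le Hmat Hcoloop; rewrite /m Hrank; lia.
have bound := nonzero_flag_rank_bound inj Hmat Hrank Hnz.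
split; first exact (unique_double_step Hmat Hloop Hcoloop inj chain flag Hrank Hk Hm bound).
split; first exact (proper_flats_structure Hmat Hloop Hcoloop inj chain flag Hrank Hk Hm bound).
exact (dual_ranks_attained Hmat Hloop Hcoloop inj chain flag Hrank Hk Hm bound).
Qed.
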